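(* Let $V$ be a finite dimensional real vector space, and let $(V,\nu,\tau,\tau^* )$ and $(V,\mu,\tau',\tau'^{*})$ be PN spaces such that $\tau^*$ and $\tau'^{*}$ are Archimedean and $\nu_p\neq\varepsilon_\infty$, $\mu_p\neq\varepsilon_\infty$ for every $p\in V$. Then $\nu$ and $\mu$ are equivalent, i.e. for every sequence $(p_m)$ in $V$ and every $p\in V$, $p_m$ strongly converges to $p$ with respect to $\nu$ if and only if $p_m$ strongly converges to $p$ with respect to $\mu$.
   Context: $\Delta^{+}$ is the set of functions $F:[-\infty,+\infty]\to[0,1]$ that are left-continuous on $\mathbb{R}$, nondecreasing, with $F(0)=0$ and $F(+\infty)=1$, ordered pointwise. $\varepsilon_0$ is the d.f. equal to $0$ for $x\le0$ and $1$ for $x>0$; $\varepsilon_\infty$ is the d.f. equal to $0$ on all of $\mathbb{R}$. A triangle function is a map $\tau:\Delta^+\times\Delta^+\to\Delta^+$ that is associative, commutative, nondecreasing in each argument, with unit $\varepsilon_0$; it is Archimedean if its only idempotents are $\varepsilon_0$ and $\varepsilon_\infty$. A PN space is a quadruple $(V,\nu,\tau,\tau^* )$ with $V$ a real vector space, $\tau\le\tau^*$ continuous triangle functions, and $\nu:V\to\Delta^+$ such that for all $p,q\in V$: (N1) $\nu_p=\varepsilon_0$ iff $p=\theta$; (N2) $\nu_{-p}=\nu_p$; (N3) $\nu_{p+q}\ge\tau(\nu_p,\nu_q)$; (N4) $\nu_p\le\tau^*(\nu_{\lambda p},\nu_{(1-\lambda)p})$ for all $\lambda\in[0,1]$. A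 sequence $(p_m)$ strongly converges to $p$ w.r.t. $\nu$ if for every $\lambda>0$ there is $N$ with $\nu_{p_m-p}(\lambda)>1-\lambda$ for $m\ge N$. *)

From HB Require Import structures.
From mathcomp Require Import all_boot all_order all_algebra.
From mathcomp Require Import all_classical all_reals topology normedtype sequences.
Set Implicit Arguments. Unset Strict Implicit. Unset Printing Implicit Defensive.
Import Order.TTheory GRing.Theory Num.Theory.
Import numFieldNormedType.Exports.
Local Open Scope classical_set_scope.
Local Open Scope ring_scope.

(* Distance distribution functions.  An element F of Delta^+ is a function on
   [-oo,+oo]; since F(-oo) = 0 and F(+oo) = 1 are fixed, F is faithfully
   represented by its restriction to R. *)
Section PN.
Variable R : realType.

Definition dplus (F : R -> R) : Prop :=
  [/\ (forall x, 0 <= F x <= 1),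
      (forall x y, x <= y -> F x <= F y),
      F 0 = 0 &
      (forall x, F y @[y --> x^'-] --> F x)].

Definition eps0 : R -> R := fun x => if 0 < x then 1 else 0.
Definition epsinf : R -> R := fun _ => 0.

Definition dle (F G : R -> R) : Prop := forall x, F x <= G x.

Definition wconv (Fn : nat -> R -> R) (F : R -> R) : Prop :=
  forall x, {for x, continuous F} -> (Fn n x @[n --> \oo] --> F x).

Definition triangle_function (tau : (R -> R) -> (R -> R) -> (R -> R)) : Prop :=
  [/\ (forall F G, dplus F -> dplus G -> dplus (tau F G)),
      (forall F G H, dplus F -> dplus G -> dplus H ->
          tau F (tau G H) = tau (tau F G) H),
      (forall F G, dplus F -> dplus G -> tau F G = tau G F),
      (forall F G H, dplus F -> dplus G -> dplus H -> dle F G ->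
          dle (tau F H) (tau G H)) &
      (forall F, dplus F -> tau F eps0 = F)].

Definition continuous_tf (tau : (R -> R) -> (R -> R) -> (R -> R)) : Prop :=
  forall (Fn Gn : nat -> R -> R) F G,
    (forall n, dplus (Fn n)) -> (forall n, dplus (Gn n)) -> dplus F -> dplus G ->
    wconv Fn F -> wconv Gn G ->
    wconv (fun n => tau (Fn n) (Gn n)) (tau F G).

Definition archimedean_tf (tau : (R -> R) -> (R -> R) -> (R -> R)) : Prop :=
  forall F, dplus F -> tau F F = F -> F = eps0 \/ F = epsinf.

Definition PN_space (V : lmodType R) (nu : V -> R -> R)
    (tau taus : (R -> R) -> (R -> R) -> (R -> R)) : Prop :=
  [/\ triangle_function tau /\ continuous_tf tau,
      triangle_function taus /\ continuous_tf taus,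
      (forall F G, dplus F -> dplus G -> dle (tau F G) (taus F G)),
      (forall p, dplus (nu p)) &
      [/\ (forall p, nu p = eps0 <-> p = 0),
      (forall p, nu (- p) = nu p),
      (forall p q, dle (tau (nu p) (nu q)) (nu (p + q))) &
      (forall p (l : R), 0 <= l <= 1 ->
          dle (nu p) (taus (nu (l *: p)) (nu ((1 - l) *: p))))]].

Definition strong_conv (V : lmodType R) (nu : V -> R -> R)
    (pm : nat -> V) (p : V) : Prop :=
  forall l : R, 0 < l -> exists N : nat, forall m, (N <= m)%N ->
    nu (pm m - p) l > 1 - l.

End PN.

From HB Require Import structures.
From mathcomp Require Import all_boot all_order all_algebra.
From mathcomp Require Import all_classical all_reals topology normedtype sequences.
From mathcomp Require Import interval_inference realfun measure lebesgue_measure.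
From mathcomp Require Import ring lra.
Import Order.TTheory GRing.Theory Num.Theory.
Import numFieldNormedType.Exports.
Set Implicit Arguments. Unset Strict Implicit. Unset Printing Implicit Defensive.
Local Open Scope classical_set_scope.
Local Open Scope ring_scope.

(* Both conditions are equivalent to [p_m -> p] in the usual topology of the
   finite dimensional space V.  By (N4) with lambda = 1/2 the distributions
   [nu (2^-n q)] increase and each is below [taus] of the next one with itself,
   so their weak limit G is an idempotent of [taus]; as [taus] is Archimedean
   and [nu q <= G] is not [epsinf], G = eps0.  Hence [nu (t q) -> eps0] as
   [t -> 0], and by (N3) and the continuity of [tau] this extends to all
   coordinates at once.  Conversely, if [p_m] does not tend to 0, rescaling a
   subsequence onto a sphere and taking a cluster point w <> 0 there would give
   [nu w = eps0], against (N1). *)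

Section DistanceDistributions.
Variable R : realType.
Implicit Types (F G : R -> R) (tau : (R -> R) -> (R -> R) -> R -> R).
Local Notation eps0 := (@eps0 R).

Lemma dplus_ge0 F x : dplus F -> 0 <= F x.
Proof. by case=> /(_ x) /andP[]. Qed.

Lemma dplus_le1 F x : dplus F -> F x <= 1.
Proof. by case=> /(_ x) /andP[]. Qed.

Lemma dplus_homo F : dplus F -> {homo F : x y / x <= y}.
Proof. by case. Qed.

Lemma dplus_eq0 F x : dplus F -> x <= 0 -> F x = 0.
Proof.
move=> dF x0; apply/eqP; rewrite eq_le dplus_ge0 // andbT.
by case: (dF) => _ _ <- _; rewrite (dplus_homo dF).
Qed.

Lemma dplus_eps0 : dplus eps0.
Proof.
split.
- by move=> x; rewrite /eps0; case: ifP => _; rewrite ?lexx ?ler01.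
- move=> x y xy; rewrite /eps0; case: ifP => x0; case: ifP => y0 //.
  by move: y0; rewrite (lt_le_trans x0 xy).
- by rewrite /eps0 ltxx.
- move=> x; apply: cvg_near_cst.
  have [x0|x0] := ltP 0 x.
    by near=> y; rewrite /eps0 x0 ifT //; near: y; exact: nbhs_left_gt.
  near=> y; rewrite /eps0 !ifF //; apply/negbTE; rewrite -leNgt //.
  by apply: le_trans x0; near: y; exact: nbhs_left_le.
Unshelve. all: by end_near.
Qed.

Lemma dle_eps0 F : dplus F -> dle F eps0.
Proof.
move=> dF x; rewrite /eps0; case: ifP => x0; first exact: dplus_le1.
by rewrite dplus_eq0 // leNgt x0.
Qed.

Lemma triangle_dle_l tau F G : triangle_function tau -> dplus F -> dplus G ->
  dle (tau F G) F.
Proof.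
case=> _ _ tauC tau_homo tau1 dF dG x.
rewrite tauC //; have := tau_homo G eps0 F dG dplus_eps0 dF (dle_eps0 dG) x.
by rewrite (tauC eps0 F) ?tau1 //; exact: dplus_eps0.
Qed.

Lemma triangle_eps0 tau : triangle_function tau -> tau eps0 eps0 = eps0.
Proof. by case=> _ _ _ _ tau1; rewrite tau1 //; exact: dplus_eps0. Qed.

Let ge_min_left (x e : R) : Order.min x e <= x. Proof. by rewrite ge_min lexx. Qed.
Let ge_min_right (x e : R) : Order.min x e <= e.
Proof. by rewrite ge_min lexx orbT. Qed.

Definition cvg_eps0 (Fs : nat -> R -> R) := forall l : R, 0 < l ->
  exists N : nat, forall m, (N <= m)%N -> 1 - l < Fs m l.

Lemma cvg_eps0_le (Fs Gs : nat -> R -> R) :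
  (forall m, dle (Fs m) (Gs m)) -> cvg_eps0 Fs -> cvg_eps0 Gs.
Proof.
move=> FG Fs0 l l0; have [N FsN] := Fs0 l l0.
by exists N => m /FsN FsNm; exact: lt_le_trans FsNm (FG m l).
Qed.

Lemma cvg_eps0_subseq (Fs : nat -> R -> R) (phi : nat -> nat) :
  (forall k, (k <= phi k)%N) -> cvg_eps0 Fs -> cvg_eps0 (Fs \o phi).
Proof.
move=> phi_ge Fs0 l l0; have [N FsN] := Fs0 l l0.
by exists N => m Nm; apply: FsN; exact: leq_trans Nm (phi_ge m).
Qed.

Lemma cvg_eps0P (Fs : nat -> R -> R) : (forall m, dplus (Fs m)) ->
  cvg_eps0 Fs <-> wconv Fs eps0.
Proof.
move=> dFs; split=> [Fs0 x _|wFs l l0].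
  have [x0|x0] := ltP 0 x; last first.
    rewrite /eps0 ifF; last by apply/negbTE; rewrite -leNgt.
    by apply: cvg_near_cst; exists 0%N => // m _; exact: dplus_eq0.
  rewrite /eps0 x0; apply/cvgrPdist_lt => e e0.
  have xe0 : 0 < Order.min x e by rewrite lt_min x0 e0.
  have [N FsN] := Fs0 _ xe0; exists N => // m /FsN Fsm /=.
  have := dplus_homo (dFs m) (ge_min_left x e); have := ge_min_right x e.
  by rewrite ger0_norm ?subr_ge0 ?(dplus_le1 _ (dFs m)); lra.
have c_l : {for l, continuous eps0}.
  apply: (@near_cst_continuous R R 1); near=> y; rewrite /eps0 ifT //.
  by near: y; exact: lt_nbhsr.
have := wFs l c_l; rewrite /eps0 l0 => /cvgrPdist_lt /(_ l l0) [N _ FsN].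
by exists N => m /FsN /=; have := ler_norm (1 - Fs m l); lra.
Unshelve. all: by end_near.
Qed.

Lemma cvg_eps0_triangle tau (Fs Gs : nat -> R -> R) :
  triangle_function tau -> continuous_tf tau ->
  (forall m, dplus (Fs m)) -> (forall m, dplus (Gs m)) ->
  cvg_eps0 Fs -> cvg_eps0 Gs -> cvg_eps0 (fun m => tau (Fs m) (Gs m)).
Proof.
move=> tau_tf tau_cont dFs dGs /(cvg_eps0P dFs) Fs0 /(cvg_eps0P dGs) Gs0.
have [tau_dplus _ _ _ _] := tau_tf.
apply/cvg_eps0P => [m|]; first exact: tau_dplus.
by rewrite -(triangle_eps0 tau_tf); apply: tau_cont => //; exact: dplus_eps0.
Qed.

Lemma cvg_eps0_cst F : dplus F -> cvg_eps0 (fun=> F) -> F = eps0.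
Proof.
move=> dF F0; apply/funext => x; rewrite /eps0; case: ifP => x0; last first.
  by rewrite dplus_eq0 // leNgt x0.
apply/eqP; rewrite eq_le dplus_le1 //=; apply/ler_addgt0Pr => e e0.
have xe0 : 0 < Order.min x e by rewrite lt_min x0 e0.
have [N /(_ N (leqnn N)) FN] := F0 _ xe0.
have := dplus_homo dF (ge_min_left x e); have := ge_min_right x e; lra.
Qed.

End DistanceDistributions.

Section MonotoneContinuityPoint.
Variables (R : realType) (F : R -> R).
Hypothesis F_homo : {homo F : x y / x <= y}.

Lemma nondecreasing_cvg_at_left x : cvg (F y @[y --> x^'-]).
Proof.
apply: nondecreasing_at_left_is_cvgr; apply: nearW => y.
  by move=> u v _ _; exact: F_homo.
by exists (F x) => _ [z + <-]; rewrite /= in_itv => /andP[_ /ltW zx]; exact: F_homo.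
Qed.

Lemma nondecreasing_cvg_at_right x : cvg (F y @[y --> x^'+]).
Proof.
apply: nondecreasing_at_right_is_cvgr; apply: nearW => y.
  by move=> u v _ _; exact: F_homo.
by exists (F x) => _ [z + <-]; rewrite /= in_itv => /andP[/ltW xz _]; exact: F_homo.
Qed.

Lemma lim_at_left_le x : lim (F y @[y --> x^'-]) <= F x.
Proof.
apply: limr_le; first exact: nondecreasing_cvg_at_left.
by near=> y; apply: F_homo; near: y; exact: nbhs_left_le.
Unshelve. all: by end_near.
Qed.

Lemma lim_at_right_ge x : F x <= lim (F y @[y --> x^'+]).
Proof.
apply: limr_ge; first exact: nondecreasing_cvg_at_right.
by near=> y; apply: F_homo; near: y; exact: nbhs_right_ge.
Unshelve. all: by end_near.
Qed.

Lemma nondecreasing_continuous_at x :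
  lim (F y @[y --> x^'-]) = lim (F y @[y --> x^'+]) -> {for x, continuous F}.
Proof.
move=> lr; have lF : lim (F y @[y --> x^'-]) = F x.
  by apply/eqP; rewrite eq_le lim_at_left_le lr lim_at_right_ge.
apply/left_right_continuousP; split.
  by rewrite -[X in _ --> X]lF; exact: nondecreasing_cvg_at_left.
by rewrite -[X in _ --> X]lF lr; exact: nondecreasing_cvg_at_right.
Qed.

(* The discontinuities of F are countable, hence Lebesgue-negligible. *)
Lemma exists_continuity_point a b : a < b ->
  exists2 z, a < z < b & {for z, continuous F}.
Proof.
move=> ab; set D := [set x | x \in (`]a, b[) /\ discontinuity F x].
have [z [zab zD]] : exists z, z \in (`]a, b[) /\ ~ discontinuity F z.
  apply/not_existsP => abD.
  have sub_abD : `]a, b[ `<=` D.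
    move=> z zab; split; first by rewrite inE.
    by apply: contrapT => zD; apply: (abD z); split; first by rewrite inE.
  have cD : countable D by exact: discontinuity_countable (in2W F_homo).
  have : (lebesgue_measure `]a, b[ <= lebesgue_measure D)%E.
    by apply: le_measure => //; rewrite inE //; exact: countable_measurable cD.
  rewrite (countable_lebesgue_measure0 cD) lebesgue_measure_itv /= lte_fin ab.
  by rewrite -EFinD lee_fin subr_le0 leNgt ab.
exists z; first by move: zab; rewrite in_itv.
apply: nondecreasing_continuous_at; apply/eqP/negPn/negP => lr; apply: zD.
by split=> //; [exact: nondecreasing_cvg_at_left | exact: nondecreasing_cvg_at_right].
Qed.

End MonotoneContinuityPoint.

(* The left-continuous regularisation of [sup_n Fs n]; for a nondecreasing
   sequence of distance distributions it is their weak limit. *)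
Definition dsup (R : realType) (Fs : nat -> R -> R) (x : R) : R :=
  sup [set r | exists n y, y < x /\ Fs n y = r].

Section NondecreasingSequenceLimit.
Variables (R : realType) (Fs : nat -> R -> R).
Hypothesis dFs : forall n, dplus (Fs n).
Hypothesis Fs_homo : forall x, nondecreasing_seq (Fs ^~ x).
Local Notation G := (dsup Fs).

Let has_sup_dsup x : has_sup [set r | exists n y, y < x /\ Fs n y = r].
Proof.
split; first by exists (Fs 0%N (x - 1)), 0%N, (x - 1); split => //; lra.
by exists 1 => _ [n [y [_ <-]]]; exact: dplus_le1.
Qed.

Lemma dsup_ub n x y : y < x -> Fs n y <= G x.
Proof. by move=> yx; apply: sup_upper_bound => //; exists n, y. Qed.

Lemma dsup_least x c : (forall n y, y < x -> Fs n y <= c) -> G x <= c.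
Proof.
move=> Fs_c; apply: ge_sup; first exact: (has_sup_dsup x).1.
by move=> _ [n [y [yx <-]]]; exact: Fs_c.
Qed.

Lemma dsup_adherent x e : 0 < e -> exists n y, y < x /\ G x - e < Fs n y.
Proof.
move=> e0; have [_ [n [y [yx <-]]] Fsny] := sup_adherent e0 (has_sup_dsup x).
by exists n, y.
Qed.

Lemma dsup_homo : {homo G : x y / x <= y}.
Proof.
by move=> x y xy; apply: dsup_least => n z zx; apply: dsup_ub; exact: lt_le_trans zx xy.
Qed.

Lemma dplus_dsup : dplus G.
Proof.
split.
- move=> x; apply/andP; split; last by apply: dsup_least => n y _; exact: dplus_le1.
  by apply: le_trans (dsup_ub 0 (_ : x - 1 < x)); [exact: dplus_ge0 | lra].
- exact: dsup_homo.
- apply/eqP; rewrite eq_le; apply/andP; split.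
    by apply: dsup_least => n y y0; rewrite dplus_eq0 // ltW.
  by apply: le_trans (dsup_ub 0 (_ : -1 < 0)); [exact: dplus_ge0 | lra].
- move=> x; apply/cvgrPdist_le => e e0.
  have [n [y [yx Fsny]]] := dsup_adherent x e0.
  near=> z.
  have yz : y < z by near: z; exact: nbhs_left_gt.
  have zx : z <= x by near: z; exact: nbhs_left_le.
  have := dsup_ub n yz; have Gzx := dsup_homo zx.
  by rewrite ger0_norm ?subr_ge0 //; lra.
Unshelve. all: by end_near.
Qed.

Lemma wconv_dsup : wconv Fs G.
Proof.
move=> x /left_right_continuousP[_ Gr]; apply/cvgrPdist_le => e e0.
have [n0 [y [yx Fsn0y]]] := dsup_adherent x e0.
move/cvgrPdist_le: Gr => /(_ e e0) Gr.
near x^'+ => t.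
have xt : x < t by near: t; exact: nbhs_right_gt.
have /ler_normlP[Gt _] : `|G x - G t| <= e by near: t.
exists n0 => // n /= n0n.
have Fsn_le : Fs n x <= G t by exact: dsup_ub.
have Fsn_ge : Fs n0 y <= Fs n x.
  exact: le_trans (dplus_homo (dFs n0) (ltW yx)) (Fs_homo x n0n).
by rewrite ler_norml; apply/andP; split; lra.
Unshelve. all: by end_near.
Qed.

End NondecreasingSequenceLimit.

Lemma not_near_subseq (P : nat -> Prop) : ~ (\forall n \near \oo, P n) ->
  exists2 phi : nat -> nat, (forall k, (k <= phi k)%N) & forall k, ~ P (phi k).
Proof.
move=> nP; have /choice[phi phiP] : forall k, exists m, (k <= m)%N /\ ~ P m.
  move=> k; apply: contrapT => nPk; apply: nP; exists k => // m km.
  by apply: contrapT => nPm; apply: nPk; exists m.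
by exists phi => k; case: (phiP k).
Qed.

Lemma cluster_subseq (R : realType) (T : pseudoMetricType R) (u : nat -> T) w :
  cluster (u @ \oo) w ->
  exists2 phi : nat -> nat, (forall k, (k <= phi k)%N) & u \o phi @ \oo --> w.
Proof.
move=> uw; have /choice[phi phiP] : forall k,
    exists m, (k <= m)%N /\ ball w k.+1%:R^-1 (u m).
  move=> k; have k0 : 0 < k.+1%:R^-1 :> R by rewrite invr_gt0 ltr0n.
  have tail : (u @ \oo) [set u m | m in [set m | (k <= m)%N]].
    by exists k => // m km; exists m.
  have [_ [[m km <-] wum]] := uw _ _ tail (nbhsx_ballx w _ k0).
  by exists m.
exists phi => [k|]; first by case: (phiP k).
apply/cvg_ballP => _/posnumP[e]; near=> k; apply: le_ball (phiP k).2.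
by apply/ltW; near: k; exact: near_infty_natSinv_lt.
Unshelve. all: by end_near.
Qed.

Section PNSpace.
Variables (R : realType) (V : lmodType R) (nu : V -> R -> R).
Variables (tau taus : (R -> R) -> (R -> R) -> R -> R).
Hypothesis PN : PN_space nu tau taus.
Local Notation eps0 := (@eps0 R).

Let pn_tau : triangle_function tau. Proof. by case: PN => [[]]. Qed.
Let pn_tau_cont : continuous_tf tau. Proof. by case: PN => [[]]. Qed.
Let pn_taus : triangle_function taus. Proof. by case: PN => _ []. Qed.
Let pn_taus_cont : continuous_tf taus. Proof. by case: PN => _ []. Qed.
Let pn_opp p : nu (- p) = nu p. Proof. by case: PN => _ _ _ _ []. Qed.
Let pn_add p q : dle (tau (nu p) (nu q)) (nu (p + q)).
Proof. by case: PN => _ _ _ _ []. Qed.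
Let pn_split p (l : R) : 0 <= l <= 1 ->
  dle (nu p) (taus (nu (l *: p)) (nu ((1 - l) *: p))).
Proof. by case: PN => _ _ _ _ [] _ _ _; apply. Qed.

Lemma pn_dplus p : dplus (nu p). Proof. by case: PN => _ _ _ dnu _; exact: dnu. Qed.

Lemma pn_eq_eps0 p : nu p = eps0 <-> p = 0. Proof. by case: PN => _ _ _ _ []. Qed.

Lemma nu_scale_le p (l : R) : `|l| <= 1 -> dle (nu p) (nu (l *: p)).
Proof.
wlog l0 : l / 0 <= l.
  move=> W; have [/W|l0] := leP 0 l; first exact.
  by rewrite -(pn_opp (l *: p)) -scaleNr => l1; apply: W; rewrite ?normrN //; lra.
rewrite ger0_norm // => l1 x; have l01 : 0 <= l <= 1 by rewrite l0.
apply: le_trans (pn_split p l01 x) _.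
exact: triangle_dle_l pn_taus (pn_dplus _) (pn_dplus _) x.
Qed.

Lemma cvg_eps0_add (xs ys : nat -> V) : cvg_eps0 (fun m => nu (xs m)) ->
  cvg_eps0 (fun m => nu (ys m)) -> cvg_eps0 (fun m => nu (xs m + ys m)).
Proof.
move=> xs0 ys0; apply: (cvg_eps0_le (fun m => pn_add (xs m) (ys m))).
by apply: cvg_eps0_triangle pn_tau pn_tau_cont _ _ xs0 ys0 => m; exact: pn_dplus.
Qed.

Lemma cvg_eps0_sum (I : Type) (s : seq I) (f : nat -> I -> V) :
  (forall i, cvg_eps0 (fun m => nu (f m i))) ->
  cvg_eps0 (fun m => nu (\sum_(i <- s) f m i)).
Proof.
move=> f0; elim: s => [|i s IHs].
  move=> l l0; exists 0%N => m _; rewrite big_nil (proj2 (pn_eq_eps0 0)) //.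
  by rewrite /eps0 l0; lra.
under [fun m => _]funext do rewrite big_cons.
exact: cvg_eps0_add.
Qed.

Hypothesis taus_archimedean : archimedean_tf taus.
Hypothesis nu_neq_epsinf : forall p, nu p <> @epsinf R.

Section Halving.
Variable q : V.
Let F n := nu ((2^-1 : R) ^+ n *: q).
Let G := dsup F.

Let dF n : dplus (F n). Proof. exact: pn_dplus. Qed.

Let half01 : 0 <= (2^-1 : R) <= 1.
Proof. by rewrite invr_ge0 ler0n invf_le1 // ler1n. Qed.

Let F_homo x : nondecreasing_seq (F ^~ x).
Proof.
apply/nondecreasing_seqP => n; rewrite /F exprS -scalerA.
by apply: nu_scale_le; rewrite ger0_norm; case/andP: half01.
Qed.

Let F_split n : dle (F n) (taus (F n.+1) (F n.+1)).
Proof.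
have := pn_split ((2^-1 : R) ^+ n *: q) half01.
by rewrite /F exprS -scalerA (_ : 1 - 2^-1 = 2^-1 :> R) //; field.
Qed.

Let dG : dplus G. Proof. exact: dplus_dsup. Qed.

Let K := taus G G.

Let dK : dplus K.
Proof. by case: pn_taus => taus_dplus _ _ _ _; exact: taus_dplus. Qed.

Let wconv_K : wconv (fun n => taus (F n.+1) (F n.+1)) K.
Proof.
have wF : wconv (fun n => F n.+1) G.
  by move=> x cx; rewrite (cvg_shiftS (F ^~ x)); exact: wconv_dsup.
exact: (pn_taus_cont (fun n => dF n.+1) (fun n => dF n.+1) dG dG wF wF).
Qed.

(* Weak convergence only controls K at its continuity points, which are dense. *)
Let dsup_halving_idem : taus G G = G.
Proof.
apply/funext => x; apply/eqP; rewrite eq_le.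
rewrite (triangle_dle_l pn_taus dG dG x) /=.
apply: (dsup_least dF) => n y yx.
have [z /andP[yz zx] cK] := exists_continuity_point (dplus_homo dK) yx.
apply: le_trans (dplus_homo (dF n) (ltW yz)) _.
apply: le_trans (dplus_homo dK (ltW zx)).
rewrite -(cvg_lim _ (wconv_K cK)) //.
apply: limr_ge; first exact: cvgP (wconv_K cK).
near=> m; apply: le_trans (F_split m z).
by apply: F_homo; near: m; exact: nbhs_infty_ge.
Unshelve. all: by end_near.
Qed.

Let dsup_halving_eps0 : G = eps0.
Proof.
have [//|Gepsinf] := taus_archimedean dG dsup_halving_idem.
case: (@nu_neq_epsinf q); apply/funext => y.
apply/eqP; rewrite eq_le dplus_ge0 ?andbT; last exact: pn_dplus.
have yy1 : y < y + 1 by rewrite ltrDl.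
by have := dsup_ub dF 0 yy1; rewrite -/G Gepsinf /F expr0 scale1r.
Qed.

Lemma nu_small_scale l : 0 < l ->
  exists2 d : R, 0 < d & forall t, `|t| <= d -> 1 - l < nu (t *: q) l.
Proof.
move=> l0; have [n [y [yl Fny]]] := dsup_adherent dF l l0.
rewrite -/G dsup_halving_eps0 /eps0 l0 in Fny.
have d0 : 0 < (2^-1 : R) ^+ n by rewrite exprn_gt0 // invr_gt0.
exists ((2^-1 : R) ^+ n) => // t td.
rewrite -[t](divfK (lt0r_neq0 d0)) -scalerA.
apply: lt_le_trans (nu_scale_le _ _ _); last first.
  by rewrite normrM normfV (gtr0_norm d0) ler_pdivrMr // mul1r.
exact: lt_le_trans Fny (dplus_homo (dF n) (ltW yl)).
Qed.

End Halving.

Lemma cvg_eps0_scale (c : nat -> R) q : c @ \oo --> 0 ->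
  cvg_eps0 (fun m => nu (c m *: q)).
Proof.
move=> /cvgr0Pnorm_le c0 l l0; have [d d0 qd] := nu_small_scale q l0.
by have [N _ cN] := c0 d d0; exists N => m /cN; exact: qd.
Qed.

End PNSpace.

Import VectorInternalTheory.

Section FiniteDimensional.
Variables (R : realType) (V : vectType R) (nu : V -> R -> R).
Variables (tau taus : (R -> R) -> (R -> R) -> R -> R).
Hypothesis PN : PN_space nu tau taus.
Hypothesis taus_archimedean : archimedean_tf taus.
Hypothesis nu_neq_epsinf : forall p, nu p <> @epsinf R.

Lemma cvg_eps0_of_cvg0 (xs : nat -> V) :
  v2r (xs m) @[m --> \oo] --> (0 : 'rV[R]_(dim V)) -> cvg_eps0 (fun m => nu (xs m)).
Proof.
move=> xs0.
have xsE m : xs m = \sum_(j < dim V) v2r (xs m) 0 j *: r2v 'e_j.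
  rewrite -{1}(v2rK (xs m)) {1}(row_sum_delta (v2r (xs m))) linear_sum.
  by apply: eq_bigr => j _; rewrite linearZ.
rewrite (funext xsE).
apply: (cvg_eps0_sum PN) => j.
apply: (cvg_eps0_scale PN taus_archimedean nu_neq_epsinf).
by have := cvg_comp _ _ xs0 (@coord_continuous R 1 (dim V) 0 j 0); rewrite mxE.
Qed.

Lemma cvg_eps0_cluster_eq0 (ys : nat -> V) w : cvg_eps0 (fun m => nu (ys m)) ->
  cluster (v2r (ys m) @[m --> \oo]) w -> w = 0.
Proof.
move=> ys0 /cluster_subseq[phi phi_ge ysw].
have zs0 : cvg_eps0 (fun k => nu (r2v w - ys (phi k))).
  apply: cvg_eps0_of_cvg0; under [fun k => _]funext do rewrite linearB /= r2vK.
  by rewrite -(subrr w); apply: cvgB => //; exact: cvg_cst.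
have := cvg_eps0_add PN (cvg_eps0_subseq phi_ge ys0) zs0.
under [fun k => _]funext do rewrite addrC subrK.
move/(cvg_eps0_cst (pn_dplus PN _))/(pn_eq_eps0 PN)/(congr1 v2r).
by rewrite r2vK linear0.
Qed.

Lemma cvg0_of_cvg_eps0 (xs : nat -> V) : cvg_eps0 (fun m => nu (xs m)) ->
  v2r (xs m) @[m --> \oo] --> (0 : 'rV[R]_(dim V)).
Proof.
move=> xs0; apply/cvgr0Pnorm_lt => e e0; apply: contrapT.
move/not_near_subseq => [phi phi_ge xs_nlt].
have xs_ge k : e <= `|v2r (xs (phi k))| by rewrite leNgt; apply/negP; exact: xs_nlt.
have xs_gt0 k : 0 < `|v2r (xs (phi k))| := lt_le_trans e0 (xs_ge k).
pose c k := e / `|v2r (xs (phi k))|.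
have c_ge0 k : 0 <= c k by rewrite divr_ge0 ?ltW.
pose ys k := c k *: xs (phi k).
have ys_sphere k : `|v2r (ys k)| = e.
  by rewrite linearZ normrZ ger0_norm // divfK // lt0r_neq0.
have ys0 : cvg_eps0 (fun k => nu (ys k)).
  apply: cvg_eps0_le (cvg_eps0_subseq phi_ge xs0) => k /=; apply: (nu_scale_le PN).
  by rewrite ger0_norm // ler_pdivrMr // mul1r.
pose S := [set r : 'rV[R]_(dim V) | `|r| = e].
have S_compact : compact S.
  apply: bounded_closed_compact.
    by exists e; split => [|M eM r /= ->]; [exact: num_real | exact: ltW].
  rewrite (_ : S = Num.norm @^-1` [set e]) //.
  by apply: preimage_closed => [r _|]; [exact: norm_continuous | exact: closed_eq].
have ys_S : (v2r (ys k) @[k --> \oo]) S by exists 0%N => // k _; exact: ys_sphere.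
have [w [Sw cw]] := S_compact _ _ ys_S.
by move: Sw; rewrite /S /= (cvg_eps0_cluster_eq0 ys0 cw) normr0 => e_eq0; lra.
Qed.

Lemma strong_conv_cvg0P (pm : nat -> V) p :
  strong_conv nu pm p <-> v2r (pm m - p) @[m --> \oo] --> (0 : 'rV[R]_(dim V)).
Proof.
(* [strong_conv nu pm p] unfolds to [cvg_eps0 (fun m => nu (pm m - p))]. *)
by split; [exact: cvg0_of_cvg_eps0 | exact: cvg_eps0_of_cvg0].
Qed.

End FiniteDimensional.

Theorem theorem20 (R : realType) (V : vectType R) (nu mu : V -> R -> R)
    (tau taus tau' taus' : (R -> R) -> (R -> R) -> (R -> R)) :
  PN_space nu tau taus -> PN_space mu tau' taus' ->
  archimedean_tf taus -> archimedean_tf taus' ->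
  (forall p, nu p <> @epsinf R) -> (forall p, mu p <> @epsinf R) ->
  forall (pm : nat -> V) (p : V), strong_conv nu pm p <-> strong_conv mu pm p.
Proof.
move=> PN PM nu_arch mu_arch nu_neq mu_neq pm p.
rewrite (strong_conv_cvg0P PN nu_arch nu_neq).
by rewrite (strong_conv_cvg0P PM mu_arch mu_neq).
Qed.
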